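(* Let $\lambda$ be a partition of $n$ and $1\le i\le n$. Let $T$ be the column superstandard tabloid of shape $\lambda$ with start $i$ and $T'$ the column superstandard tabloid of shape $\lambda$ with start $i+1$. Then $\operatorname{charge}(T')\equiv\operatorname{charge}(T)-1\pmod{d_\lambda}$.
   Context: Fix $n\ge1$; $\overline i=i+n\mathbb Z$, $[\overline n]=\{\overline1,\dots,\overline n\}$. A tabloid of shape $\lambda$ is a sequence $(T_1,\dots,T_{\ell(\lambda)})$ of pairwise disjoint subsets of $[\overline n]$ with $|T_r|=\lambda_r$ and union $[\overline n]$ (row 1 highest). The column superstandard tabloid of shape $\lambda$ with start $i$ is obtained by filling the columns of the Young diagram of $\lambda$, left to right and each from top to bottom, with consecutive entries $\overline i,\overline{i+1},\overline{i+2},\dots$, then taking $T_r$ to be the set of entries in row $r$. Broken order: $\overline1<\dots<\overline n$. Local charge: if $\lambda_k=\lambda_{k+1}=m$, list $T_k$ as $\overline{a_1}<\dots<\overline{a_m}$ (broken order); for $t=1,\dots,m$ in turn match $\overline{a_t}$ with the smallest unmatched element of $T_{k+1}$ larger than $\overline{a_t}$ if one exists, otherwise with the smallest unmatched element of $T_{k+1}$; $\operatorname{lch}_k(T)$ is the number of $t$ with $\overline{a_t}$ larger than its match. If $\lambda_k\ne\lambda_{k+1}$, $\operatorname{lch}_k(T)=0$. $\operatorname{charge}(T)=\sum_{k=1}^{\ell(\lambda)-1}k\cdot\operatorname{lch}_k(T)$. $d_\lambda=\gcd(\lambda'_1,\lambda'_2,\dots)$ with $\lambda'$ the conjugate partition.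 *)

From mathcomp Require Import all_boot.
Set Implicit Arguments. Unset Strict Implicit. Unset Printing Implicit Defensive.

(* Conventions: the residue class  \overline{v+1}  (v = 0..n-1) is encoded by
   the natural number v.  Hence the broken order 1bar < ... < nbar is the usual
   order on nat, and the residue of an integer j >= 1 is encoded by (j - 1) %% n. *)

Definition is_partition (n : nat) (la : seq nat) : bool :=
  [&& sorted geq la, all (fun x => 0 < x) la & sumn la == n].

Definition conj_part (la : seq nat) : seq nat :=
  [seq count (fun x => c < x) la | c <- iota 0 (head 0 la)].

Definition d_la (la : seq nat) : nat := foldr gcdn 0 (conj_part la).

(* A tabloid is encoded as the sequence of its rows T_1, ..., T_l,
   each row a seq of encoded residues. *)
Definition tabloid := seq (seq nat).

(* Column superstandard tabloid of shape la with start i: the cell in row r,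
   column c (0-based) is the p-th cell in column-reading order, where
   p = la'_0 + ... + la'_{c-1} + r, and is filled with the residue of i + p. *)
Definition col_superstd (n : nat) (la : seq nat) (i : nat) : tabloid :=
  [seq [seq (i + (sumn (take c (conj_part la)) + r) - 1) %% n
        | c <- iota 0 (nth 0 la r)]
  | r <- iota 0 (size la)].

(* Greedy matching of the sorted list A (row T_k) into the sorted list B
   (row T_{k+1}): each a is matched with the smallest unmatched b > a if one
   exists, otherwise with the smallest unmatched b; counts the a's that are
   larger than their match. *)
Fixpoint match_count (A B : seq nat) : nat :=
  match A with
  | [::] => 0
  | a :: A' =>
      let b := match [seq x <- B | a < x] with
               | b0 :: _ => b0
               | [::] => head 0 B
               end in
      (b < a) + match_count A' (rem b B)
  end.

(* local charge lch_k (k is 1-based, rows are T_k and T_{k+1}) *)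
Definition lch (la : seq nat) (T : tabloid) (k : nat) : nat :=
  if nth 0 la k.-1 == nth 0 la k then
    match_count (sort leq (nth [::] T k.-1)) (sort leq (nth [::] T k))
  else 0.

Definition charge (la : seq nat) (T : tabloid) : nat :=
  \sum_(1 <= k < size la) k * lch la T k.

From mathcomp Require Import all_boot zify.

(* In the column superstandard tabloid with start j, the cell at column-reading
   position p holds the residue of j + p, so when two consecutive rows have the
   same length the lower one is the upper one with 1 added to every entry.  The
   greedy matching then pairs every entry with its successor, except \bar n,
   which wraps around to \bar 1: lch_k = 1 exactly when \bar n lies in row k.
   When lambda_k > lambda_(k+1), k is a part of lambda' and hence a multiple of
   d_lambda; so are l(lambda) and every column start.  Modulo d_lambda the
   charge is therefore the row index of \bar n, which agrees with its
   column-reading position plus one, whence charge(T) + j ≡ n + 1 ≡ 1. *)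

Set Implicit Arguments.
Unset Strict Implicit.
Unset Printing Implicit Defensive.

Lemma match_count_map_succn (A : seq nat) : match_count A (map succn A) = 0.
Proof. by elim: A => //= a A IH; rewrite ltnSn /= eqxx IH ltnNge leqnSn. Qed.

Lemma match_count_rcons_wrap (A : seq nat) x :
  match_count (rcons A x) (0 :: map succn A) = (0 < x).
Proof.
elim: A => [|a A IH] /=; first by rewrite addn0.
by rewrite ltnSn /= eqxx IH ltnNge leqnSn.
Qed.

Lemma sort_leq_eq (s t : seq nat) : pairwise leq t -> perm_eq s t -> sort leq s = t.
Proof.
rewrite -(sorted_pairwise leq_trans) => t_sorted s_t.
apply: (sorted_eq leq_trans anti_leq) => //; first exact: sort_sorted leq_total _.
by rewrite perm_sort.
Qed.

Lemma sort_map_succn (s : seq nat) : sort leq (map succn s) = map succn (sort leq s).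
Proof. by rewrite sort_map. Qed.

Lemma match_count_rotate (n : nat) (X : seq nat) : 1 < n -> all (gtn n) X ->
  count_mem n.-1 X <= 1 ->
  match_count (sort leq X) (sort leq [seq x.+1 %% n | x <- X]) = (n.-1 \in X).
Proof.
move=> n_gt1 /allP X_lt_n X_last.
have below_last Z : {subset Z <= X} -> n.-1 \notin Z -> all (gtn n.-1) Z.
  move=> /(_ _ _)/X_lt_n Z_lt_n last_notin; apply/allP => z z_in.
  have : z != n.-1 by apply: contraNneq last_notin => <-.
  by have /= := Z_lt_n z z_in; lia.
have rotate_small Z : all (gtn n.-1) Z -> [seq z.+1 %% n | z <- Z] = map succn Z.
  move=> /allP Z_lt; apply/eq_in_map => z /Z_lt /= z_lt.
  by rewrite modn_small //; lia.
have [last_in | last_notin] := boolP (n.-1 \in X); last first.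
  by rewrite rotate_small ?sort_map_succn ?match_count_map_succn ?below_last.
have X_perm := perm_to_rem last_in; set Y := rem n.-1 X in X_perm.
have Y_lt : all (gtn n.-1) Y.
  apply: below_last => [y /mem_rem //|].
  apply: contraTN X_last => last_in_Y.
  by rewrite (permP X_perm) /= eqxx add1n ltnS -ltnNge -has_count has_pred1.
have -> : sort leq X = rcons (sort leq Y) n.-1.
  apply: sort_leq_eq.
    rewrite pairwise_rcons -(sorted_pairwise leq_trans) (sort_sorted leq_total).
    by rewrite all_sort andbT; apply: sub_all Y_lt => y /ltnW.
  by rewrite (permPl X_perm) perm_sym perm_rcons perm_cons perm_sort.
have -> : sort leq [seq x.+1 %% n | x <- X] = 0 :: map succn (sort leq Y).
  apply: sort_leq_eq.
    rewrite pairwise_cons -sort_map_succn -(sorted_pairwise leq_trans).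
    by rewrite (sort_sorted leq_total) andbT; apply/allP.
  rewrite (permPl (perm_map _ X_perm)) /= prednK ?modnn; last lia.
  by rewrite perm_cons rotate_small // perm_map // perm_sym perm_sort.
by rewrite match_count_rcons_wrap; lia.
Qed.

Definition col_start (la : seq nat) (c : nat) : nat := sumn (take c (conj_part la)).

Lemma geq_trans : transitive geq.
Proof. by move=> a b c /= ba cb; exact: leq_trans cb ba. Qed.

Lemma ltn_nth_count (la : seq nat) c r : sorted geq la ->
  (c < nth 0 la r) = (r < count (fun x => c < x) la).
Proof.
elim: la r => [|x la IH] r /=; first by rewrite nth_nil.
rewrite path_sortedE; last exact: geq_trans.
case/andP=> /allP la_le_x la_sorted.
have [c_lt_x | x_le_c] := ltnP c x; first by case: r => [|r] //=; rewrite IH.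
have count0 : count (fun y => c < y) la = 0.
  apply/eqP; rewrite -leqn0 leqNgt -has_count; apply/hasPn => y /la_le_x y_le_x.
  by rewrite -leqNgt (leq_trans y_le_x).
case: r => [|r] /=; first by rewrite count0 ltnNge x_le_c.
by rewrite IH // add0n count0.
Qed.

Lemma dvdn_foldr_gcdn (s : seq nat) x : x \in s -> foldr gcdn 0 s %| x.
Proof.
elim: s => //= y s IH; rewrite inE => /predU1P[-> | x_in]; first exact: dvdn_gcdl.
exact: dvdn_trans (dvdn_gcdr _ _) (IH x_in).
Qed.

Section ConjugatePartition.

Variable la : seq nat.

Lemma nth_conj_part c : c < head 0 la ->
  nth 0 (conj_part la) c = count (fun x => c < x) la.
Proof. by move=> c_lt; rewrite (nth_map 0) ?size_iota // nth_iota. Qed.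

Lemma col_startS c : col_start la c.+1 = col_start la c + nth 0 (conj_part la) c.
Proof.
rewrite /col_start; have [c_lt | c_ge] := ltnP c (size (conj_part la)).
  by rewrite (take_nth 0) // sumn_rcons.
by rewrite !take_oversize ?nth_default ?addn0 // (leq_trans c_ge).
Qed.

Lemma dvdn_d_la_count c : c < head 0 la -> d_la la %| count (fun x => c < x) la.
Proof. by move=> c_lt; apply: dvdn_foldr_gcdn; apply: map_f; rewrite mem_iota. Qed.

Lemma dvdn_d_la_col_start c : d_la la %| col_start la c.
Proof.
rewrite /col_start sumnE big_seq; apply: dvdn_sum => x /mem_take.
exact: dvdn_foldr_gcdn.
Qed.

Lemma sum_col_start (F : nat -> nat) m :
  \sum_(0 <= c < m) \sum_(0 <= r < nth 0 (conj_part la) c) F (col_start la c + r)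
  = \sum_(0 <= p < col_start la m) F p.
Proof.
elim: m => [|m IH]; first by rewrite /col_start take0 !big_geq.
rewrite big_nat_recr //= IH col_startS (big_cat_nat _ (leq_addr _ _)) //=.
congr (_ + _); rewrite -{2}[col_start la m]add0n big_addn addKn.
by apply: eq_bigr => r _; rewrite addnC.
Qed.

Hypothesis la_sorted : sorted geq la.

Lemma leq_nth_succ r : nth 0 la r.+1 <= nth 0 la r.
Proof.
rewrite leqNgt ltn_nth_count //; apply/negP => /ltnW.
by rewrite -ltn_nth_count // ltnn.
Qed.

Lemma leq_nth_head r : nth 0 la r <= head 0 la.
Proof. by elim: r => [|r IH]; [rewrite nth0 | exact: leq_trans (leq_nth_succ r) IH]. Qed.

Lemma dvdn_d_la_descent r : nth 0 la r.+1 < nth 0 la r -> d_la la %| r.+1.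
Proof.
set c := nth 0 la r.+1 => c_lt.
have r_lt : r < count (fun x => c < x) la by rewrite -ltn_nth_count.
have count_le : count (fun x => c < x) la <= r.+1.
  by rewrite leqNgt -ltn_nth_count // ltnn.
have -> : r.+1 = count (fun x => c < x) la by apply/eqP; rewrite eqn_leq r_lt.
exact/dvdn_d_la_count/(leq_trans c_lt)/leq_nth_head.
Qed.

Lemma sum_cells_col_reading (F : nat -> nat) :
  \sum_(0 <= r < size la) \sum_(0 <= c < nth 0 la r) F (col_start la c + r)
  = \sum_(0 <= p < col_start la (head 0 la)) F p.
Proof.
rewrite -sum_col_start.
under eq_bigr => r _ do
  rewrite (big_nat_widen 0 _ (head 0 la)) ?leq_nth_head // big_mkcond /=.
rewrite exchange_big_nat; apply: eq_big_nat => c /andP[_ c_lt].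
rewrite nth_conj_part // [RHS](big_nat_widen 0 _ (size la)) ?count_size //.
rewrite [RHS]big_mkcond.
by apply: eq_bigr => r _; rewrite ltn_nth_count.
Qed.

End ConjugatePartition.

Section Partition.

Variables (n : nat) (la : seq nat).
Hypothesis la_part : is_partition n la.

Let la_sorted : sorted geq la. Proof. by case/and3P: la_part. Qed.

Lemma col_start_head : col_start la (head 0 la) = n.
Proof.
have := sum_cells_col_reading la_sorted (fun _ => 1).
rewrite sum_nat_const_nat subn0 muln1 => <-.
case/and3P: la_part => _ _ /eqP <-; rewrite sumnE [RHS](big_nth 0).
by apply: eq_bigr => r _; rewrite sum_nat_const_nat subn0 muln1.
Qed.

Lemma dvdn_d_la_n : d_la la %| n.
Proof. by rewrite -col_start_head dvdn_d_la_col_start. Qed.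

Lemma size_partition_gt0 : 0 < n -> 0 < size la.
Proof. by case/and3P: la_part => _ _ /eqP; case: (la) => //= <-. Qed.

Lemma dvdn_d_la_size : 0 < n -> d_la la %| size la.
Proof.
move=> /size_partition_gt0 size_gt0.
case/and3P: la_part => _ /(all_nthP 0) la_pos _.
rewrite -(prednK size_gt0); apply: dvdn_d_la_descent la_sorted _ _.
by rewrite prednK // nth_default // la_pos // prednK.
Qed.

End Partition.

Lemma eq_modn_sum d m k (F G : nat -> nat) :
  (forall i, m <= i < k -> F i = G i %[mod d]) ->
  \sum_(m <= i < k) F i = \sum_(m <= i < k) G i %[mod d].
Proof.
move=> FG; rewrite -modn_summ -[RHS]modn_summ; congr (_ %% _).
by apply: eq_big_nat => i /FG.
Qed.

Lemma mem_count_le1 (T : eqType) (x : T) s :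
  count_mem x s <= 1 -> (x \in s : nat) = count_mem x s.
Proof. by rewrite -has_pred1 has_count; case: count => [|[]]. Qed.

Definition superstd_row (n : nat) (la : seq nat) (j r : nat) : seq nat :=
  [seq (j + (col_start la c + r) - 1) %% n | c <- iota 0 (nth 0 la r)].

Lemma nth_col_superstd n la j r : r < size la ->
  nth [::] (col_superstd n la j) r = superstd_row n la j r.
Proof. by move=> r_lt; rewrite (nth_map 0) ?size_iota // nth_iota. Qed.

Lemma superstd_row_succ n la j r : 0 < j -> nth 0 la r = nth 0 la r.+1 ->
  superstd_row n la j r.+1 = [seq x.+1 %% n | x <- superstd_row n la j r].
Proof.
move=> j_gt0 same_len; rewrite /superstd_row -map_comp -same_len.
apply: eq_map => c /=; rewrite -[in RHS]addn1 modnDml; congr (_ %% _); lia.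
Qed.

Section ColumnSuperstandard.

Variables (n : nat) (la : seq nat) (j q : nat).
Hypotheses (n_gt1 : 1 < n) (la_part : is_partition n la) (j_gt0 : 0 < j).
(* [q] is the column-reading position of the cell holding \bar n. *)
Hypotheses (q_lt_n : q < n) (q_last : (j + q - 1) %% n = n.-1).

Let la_sorted : sorted geq la. Proof. by case/and3P: la_part. Qed.

Let last_count r := count_mem n.-1 (superstd_row n la j r).

Lemma residue_eq_last p : p < n -> ((j + p - 1) %% n == n.-1) = (p == q).
Proof.
move=> p_lt_n; apply/eqP/eqP => [p_last | -> //].
have : j.-1 + p == j.-1 + q %[mod n].
  by rewrite -!subn1 !addnBAC // p_last q_last.
by rewrite eqn_modDl !modn_small // => /eqP.
Qed.

Lemma sum_cells_last (G : nat -> nat) :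
  \sum_(0 <= r < size la) \sum_(0 <= c < nth 0 la r)
     G (col_start la c + r) * ((j + (col_start la c + r) - 1) %% n == n.-1)
  = G q.
Proof.
pose F p := G p * ((j + p - 1) %% n == n.-1).
rewrite (sum_cells_col_reading la_sorted F) (col_start_head la_part).
rewrite (eq_big_nat _ _ (F2 := fun p => G p * (p == q))); last first.
  by move=> p /andP[_ p_lt]; rewrite /F residue_eq_last.
rewrite (bigD1_seq q) ?mem_index_iota ?iota_uniq //= eqxx muln1 big1 ?addn0 //.
by move=> p /negbTE ->; rewrite muln0.
Qed.

Lemma last_count_sum r : last_count r =
  \sum_(0 <= c < nth 0 la r) ((j + (col_start la c + r) - 1) %% n == n.-1).
Proof.
rewrite /last_count count_map -sum1_count big_mkcond /index_iota subn0.
by apply: eq_bigr => c _ /=; case: eqP.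
Qed.

Lemma sum_last_count : \sum_(0 <= r < size la) last_count r = 1.
Proof.
rewrite -(sum_cells_last (fun _ => 1)).
by apply: eq_bigr => r _; rewrite last_count_sum; apply: eq_bigr => c _; rewrite mul1n.
Qed.

Lemma last_count_le1 r : r < size la -> last_count r <= 1.
Proof.
move=> r_lt; rewrite -sum_last_count (bigD1_seq r) ?mem_index_iota ?iota_uniq //=.
exact: leq_addr.
Qed.

Lemma sum_succ_last_count :
  \sum_(0 <= r < size la) r.+1 * last_count r = q.+1 %[mod d_la la].
Proof.
rewrite -(sum_cells_last succn); apply: eq_modn_sum => r _.
rewrite last_count_sum big_distrr /=; apply: eq_modn_sum => c _.
by rewrite -addnS mulnDl -[RHS]modnDml (eqP (dvdn_mulr _ (dvdn_d_la_col_start la c))).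
Qed.

Lemma lch_col_superstd r : r.+1 < size la ->
  r.+1 * lch la (col_superstd n la j) r.+1 = r.+1 * last_count r %[mod d_la la].
Proof.
move=> r_lt; rewrite /lch /= !nth_col_superstd ?(ltnW r_lt) //.
have last_le1 := last_count_le1 (ltnW r_lt).
have [same_len | new_len] := eqVneq (nth 0 la r) (nth 0 la r.+1).
  rewrite superstd_row_succ // match_count_rotate // ?mem_count_le1 //.
  by apply/allP => x /mapP[c _ ->]; rewrite /= ltn_mod; lia.
have descent : nth 0 la r.+1 < nth 0 la r.
  by rewrite ltn_neqAle eq_sym new_len leq_nth_succ.
by rewrite muln0 -modnMml (eqP (dvdn_d_la_descent la_sorted descent)) mul0n.
Qed.

Lemma charge_col_superstd : charge la (col_superstd n la j) = q.+1 %[mod d_la la].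
Proof.
have n_gt0 : 0 < n by apply: ltnW.
have /prednK size_eq := size_partition_gt0 la_part n_gt0.
rewrite /charge -size_eq big_add1 /=.
rewrite (eq_modn_sum (G := fun r => r.+1 * last_count r)); last first.
  by move=> r /andP[_ r_lt]; apply: lch_col_superstd; rewrite -size_eq.
rewrite -sum_succ_last_count -[in RHS]size_eq big_nat_recr //= size_eq.
by rewrite -modnDmr (eqP (dvdn_mulr _ (dvdn_d_la_size la_part n_gt0))) addn0.
Qed.

End ColumnSuperstandard.

Lemma charge_col_superstd_add_start n la j : 0 < n -> is_partition n la ->
  0 < j <= n.+1 -> charge la (col_superstd n la j) + j = 1 %[mod d_la la].
Proof.
move=> n_gt0 la_part /andP[j_gt0 j_le].
have /eqP n_mod_d := dvdn_d_la_n la_part.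
have [n_le1 | n_gt1] := leqP n 1.
  have d1 : d_la la = 1.
    by apply/eqP; rewrite -dvdn1 (_ : 1 = n) ?dvdn_d_la_n //; lia.
  by rewrite d1 !modn1.
have [j_le_n | j_gt_n] := leqP j n.
  rewrite -modnDml (charge_col_superstd (q := n - j)) //; last 2 first.
  - lia.
  - by rewrite (_ : j + (n - j) - 1 = n.-1) ?modn_small //; lia.
  rewrite modnDml (_ : (n - j).+1 + j = n + 1); last lia.
  by rewrite -modnDml n_mod_d.
have -> : j = n.+1 by lia.
rewrite -modnDml (charge_col_superstd (q := n.-1)) //; last 2 first.
- lia.
- by rewrite (_ : n.+1 + n.-1 - 1 = n + n.-1) ?modnDl ?modn_small //; lia.
rewrite modnDml (_ : n.-1.+1 + n.+1 = n + (n + 1)); last lia.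
by rewrite -modnDml n_mod_d add0n -modnDml n_mod_d.
Qed.

Theorem lemma8p5 (n : nat) (la : seq nat) (i : nat) :
  0 < n -> is_partition n la -> 1 <= i <= n ->
  charge la (col_superstd n la i.+1) + 1 = charge la (col_superstd n la i)
    %[mod d_la la].
Proof.
move=> n_gt0 la_part /andP[i_gt0 i_le_n].
apply/eqP; rewrite -(eqn_modDr i) -addnA add1n; apply/eqP.
by rewrite !charge_col_superstd_add_start // i_gt0 ltnW.
Qed.
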